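(* Let $N\ge 2$ and let $p$ be odd with $3\le p\le 2N-1$. Let $\Lambda=\Lambda^\bullet(\mathbb{C}^{N\times N})$ be the exterior algebra on the $N^2$ odd generators $\Psi_{ij}$, $V_R=\Lambda^R$, and $q:=\mathrm{Tr}(\Psi^p)=\sum_{i_1,\dots,i_p=1}^N\Psi_{i_1i_2}\Psi_{i_2i_3}\cdots\Psi_{i_pi_1}\in\Lambda^p$. Let $Q_R:V_R\to V_{R+p}$, $Q_R(a)=q\wedge a$, and let $\langle a,b\rangle$ denote the coefficient of the top-degree component $[a\wedge b]_{\Lambda^{N^2}}$ (with respect to a fixed generator of $\Lambda^{N^2}$). Then for all $a\in V_R$ and $b\in V_{N^2-p-R}$, \[ \langle Q_Ra,\,b\rangle=(-1)^{pR}\langle a,\,Q_{N^2-p-R}\,b\rangle. \] Consequently $r_R=r_{N^2-p-R}$ for all $R$, where $r_R:=\operatorname{rank}Q_R$, and the rank polynomial $\mathcal R_{p,N}(x)=\sum_R r_Rx^R$ is palindromic of degree $N^2-p$.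
   Context: Here $r_R:=0$ when $R<0$ or $R>N^2-p$. The product $\Psi_{i_1i_2}\cdots\Psi_{i_pi_1}$ is the wedge product in $\Lambda$. *)

(* Exterior algebra Λ(F^T) on a finite set T of odd generators,
   over a field F, realised concretely as coefficient functions on the monomial
   basis e_S (S : {set T}), with the generators ordered by enum_rank. *)
From HB Require Import structures.
From mathcomp Require Import all_boot all_order all_algebra.
From mathcomp Require Import complex.
Set Implicit Arguments. Unset Strict Implicit. Unset Printing Implicit Defensive.
Import Order.TTheory GRing.Theory Num.Theory.
Local Open Scope ring_scope.

Section Exterior.
Variables (F : fieldType) (T : finType).

Definition ext := {ffun {set T} -> F^o}.

(* sign of e_S ∧ e_S' = ± e_{S ∪ S'} (S, S' disjoint): (-1)^(number of
   inversions, i.e. pairs s ∈ S, s' ∈ S' with s' before s in the order) *)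
Definition wsign (X Y : {set T}) : F :=
  (-1) ^+ #|[set x : T * T | (x.1 \in X) && (x.2 \in Y) &&
                              (enum_rank x.2 < enum_rank x.1)%N]|.

Definition wedge (a b : ext) : ext :=
  [ffun U : {set T} => \sum_(X : {set T}) \sum_(Y : {set T} |
       [disjoint X & Y] && (X :|: Y == U)) wsign X Y * a X * b Y].

Definition emono (X : {set T}) : ext := [ffun U => (U == X)%:R].
Definition eone : ext := emono set0.
Definition egen (t : T) : ext := emono [set t].

Definition Lam (R : nat) : {vspace ext} :=
  <<[seq emono X | X <- enum [set X : {set T} | #|X| == R]]>>%VS.

Definition topPair (a b : ext) : F := wedge a b setT.

Definition Qmap (q : ext) : 'End(ext) := linfun (wedge q).
Definition rankQ (q : ext) (R : nat) : nat := \dim (Qmap q @: Lam R)%VS.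
End Exterior.

Definition Psi (F : fieldType) (N : nat) (i j : 'I_N) : ext F ('I_N * 'I_N)%type :=
  egen F (i, j).

(* q = Tr(Ψ^p) = Σ_{i_1..i_p} Ψ_{i1 i2} ∧ Ψ_{i2 i3} ∧ ... ∧ Ψ_{ip i1}
   (index k ↦ i_{k+1}, with cyclic successor ordS) *)
Definition trPsi (F : fieldType) (N p : nat) : ext F ('I_N * 'I_N)%type :=
  \sum_(i : {ffun 'I_p -> 'I_N})
     \big[@wedge F _/eone F _]_(k < p) Psi F (i k) (i (ordS k)).

(* rank polynomial  Σ_R r_R x^R  (r_R = 0 for R > N^2 - p automatically,
   since Λ^{R+p} = 0 there; sum runs over all degrees 0..N^2) *)
Definition rankPoly (F : fieldType) (N p : nat) : {poly int} :=
  \sum_(R < (N ^ 2).+1) (rankQ (trPsi F N p) R)%:Z *: 'X^R.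

(* For [q] homogeneous of degree [d] and [a] of degree [R], both sides of the
   pairing identity are sums, over the partitions [C, A, B] of the generators,
   of [q_C a_A b_B] times signs that differ by [(-1)^(d R)].  In the monomial
   basis this says that the matrix of [Q_R] is, up to signed permutation
   matrices, the transpose of the matrix of [Q_(N^2-p-R)], so [r_R = r_(N^2-p-R)].
   The rank polynomial has degree [N^2 - p] since [r_R = 0] for [R > N^2 - p]
   and [r_(N^2-p) = r_0 <> 0], i.e. [q <> 0].  For [p = 2K+1], the coefficient
   of [q] on the edge set of the closed walk [0, 0, 1, 1, ..., K-1, K-1, K] is a
   sum over the closed walks using each of these edges once.  Every vertex has
   at most one exit besides its loop, which forces these walks to be rotations
   of the first one, and rotating an odd number of odd generators costs no sign. *)

From HB Require Import structures.
From mathcomp Require Import all_boot all_order all_algebra.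
From mathcomp Require Import reals complex.
From mathcomp Require Import zify ring.
Import Order.TTheory GRing.Theory Num.Theory.
Import VectorInternalTheory.

Set Implicit Arguments. Unset Strict Implicit. Unset Printing Implicit Defensive.

Lemma cardsU_disjoint (D : finType) (S1 S2 : {set D}) :
  [disjoint S1 & S2] -> #|S1 :|: S2| = #|S1| + #|S2|.
Proof. by move/disjoint_setI0 => dS; rewrite -cardsUI dS cards0 addn0. Qed.

Lemma setUD_sub (T : finType) (X U : {set T}) : X \subset U -> X :|: U :\: X = U.
Proof. by move=> XU; rewrite setDE setUIr setUCr setIT; apply/setUidPr. Qed.

Lemma disjoint_setD (T : finType) (X U : {set T}) : [disjoint X & U :\: X].
Proof. by rewrite -setI_eq0; apply/eqP/setP => x; rewrite !inE; case: (x \in X). Qed.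

Lemma disjointU_eqEl (T : finType) (X Y U : {set T}) : X \subset U ->
  ([disjoint X & Y] && (X :|: Y == U)) = (Y == U :\: X).
Proof.
move=> XU; apply/andP/eqP => [[dXY /eqP <-]|->]; last by rewrite disjoint_setD setUD_sub.
by rewrite setDUl setDv set0U; apply/esym/setDidPl; rewrite disjoint_sym.
Qed.

Lemma disjointU_eqEr (T : finType) (X Y U : {set T}) : Y \subset U ->
  ([disjoint X & Y] && (X :|: Y == U)) = (X == U :\: Y).
Proof. by move=> YU; rewrite disjoint_sym setUC disjointU_eqEl. Qed.

Section Exterior.
Variables (F : fieldType) (T : finType).
Local Open Scope ring_scope.
Local Notation ext := (ext F T).
Local Notation wedge := (@wedge F T).
Local Notation emono := (@emono F T).
Local Notation wsign := (@wsign F T).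
Local Notation eone := (eone F T).
Implicit Types (X Y Z A B C U : {set T}) (a b c : ext).

Definition inversions X Y : {set T * T} :=
  [set x | (x.1 \in X) && (x.2 \in Y) && (enum_rank x.2 < enum_rank x.1)%N].

Lemma wsignE X Y : wsign X Y = (-1) ^+ #|inversions X Y|.
Proof. by []. Qed.

Lemma wsign0l Y : wsign set0 Y = 1.
Proof.
by rewrite wsignE (_ : inversions _ _ = set0) ?cards0 //; apply/setP => x; rewrite !inE.
Qed.

Lemma wsign0r X : wsign X set0 = 1.
Proof.
rewrite wsignE (_ : inversions _ _ = set0) ?cards0 //.
by apply/setP => x; rewrite !inE andbF.
Qed.

Lemma wsignUl X Y Z : [disjoint X & Y] -> wsign (X :|: Y) Z = wsign X Z * wsign Y Z.
Proof.
move=> dXY; rewrite !wsignE -exprD -cardsU_disjoint.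
  by congr (_ ^+ _); apply: eq_card => -[x y]; rewrite !inE -!andbA -andb_orl.
rewrite -setI_eq0; apply/eqP/setP => -[x y]; rewrite !inE /=.
by case xX: (x \in X); rewrite /= ?(disjointFr dXY xX) ?andbF.
Qed.

Lemma wsignUr X Y Z : [disjoint Y & Z] -> wsign X (Y :|: Z) = wsign X Y * wsign X Z.
Proof.
move=> dYZ; rewrite !wsignE -exprD -cardsU_disjoint.
  by congr (_ ^+ _); apply: eq_card => -[x y]; rewrite !inE andb_orr andb_orl.
rewrite -setI_eq0; apply/eqP/setP => -[x y]; rewrite !inE /=.
by case: (boolP (y \in Y)) => yY; rewrite ?(disjointFr dYZ yY) !andbF.
Qed.

(* Every pair of [X * Y] is an inversion of exactly one of [(X, Y)], [(Y, X)]. *)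
Lemma wsignC X Y : [disjoint X & Y] -> wsign Y X = (-1) ^+ (#|X| * #|Y|) * wsign X Y.
Proof.
move=> dXY; pose swap (x : T * T) := (x.2, x.1).
have swap_inj : injective swap by move=> [] ? ? [] ? ? [] -> ->.
have cardXY : #|inversions X Y :|: swap @^-1: inversions Y X| = (#|X| * #|Y|)%N.
  rewrite -cardsX; apply: eq_card => -[x y]; rewrite !inE /=.
  case: (boolP (x \in X)) => xX /=; last by rewrite andbF.
  case: (boolP (y \in Y)) => yY //=; rewrite ?andbT.
  case: ltngtP => // /ord_inj/enum_rank_inj exy.
  by rewrite exy (disjointFr dXY xX) in yY.
rewrite cardsU_disjoint ?card_preimset // in cardXY; last first.
  rewrite -setI_eq0; apply/eqP/setP => -[x y]; rewrite !inE /=.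
  by case: (x \in X); case: (y \in Y) => //=; case: ltngtP.
by rewrite !wsignE -cardXY exprD mulrAC -expr2 sqrr_sign mul1r.
Qed.

(* The signs of the term [q_C a_A b_B], [C = ~: (A :|: B)], on the two sides
   of [topPair_adjoint]. *)
Lemma wsign_compl A B : [disjoint A & B] ->
  wsign (~: B) B * wsign (~: (A :|: B)) A =
  (-1) ^+ (#|~: (A :|: B)| * #|A|) * wsign A (~: A) * wsign (~: (A :|: B)) B.
Proof.
move=> dAB; set C := ~: (A :|: B).
have eCA : ~: B = C :|: A.
  apply/setP => x; rewrite !inE.
  case: (boolP (x \in A)) => xA; case: (boolP (x \in B)) => xB //=.
  by rewrite (disjointFr dAB xA) in xB.
have eCB : ~: A = C :|: B.
  apply/setP => x; rewrite !inE.
  case: (boolP (x \in A)) => xA; case: (boolP (x \in B)) => xB //=.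
  by rewrite (disjointFr dAB xA) in xB.
have dCA : [disjoint C & A] by rewrite disjoints_subset setCS subsetUl.
have dCB : [disjoint C & B] by rewrite disjoints_subset setCS subsetUr.
rewrite eCA eCB wsignUl // wsignUr // (wsignC (_ : [disjoint A & C])) 1?disjoint_sym //.
by rewrite mulnC; ring.
Qed.

Lemma wedgeEl a b U :
  wedge a b U = \sum_(X : {set T} | X \subset U) wsign X (U :\: X) * a X * b (U :\: X).
Proof.
rewrite ffunE [RHS]big_mkcond; apply: eq_bigr => X _; case: ifP => XU.
  by rewrite (big_pred1 (U :\: X)) // => Y; rewrite /= disjointU_eqEl.
rewrite big_pred0 // => Y; apply/negbTE/negP => /andP[_ /eqP eU].
by move: XU; rewrite -eU subsetUl.
Qed.

Lemma wedgeEr a b U :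
  wedge a b U = \sum_(Y : {set T} | Y \subset U) wsign (U :\: Y) Y * a (U :\: Y) * b Y.
Proof.
rewrite ffunE (eq_bigr (fun X : {set T} => \sum_(Y : {set T}) if [disjoint X & Y] && (X :|: Y == U)
   then wsign X Y * a X * b Y else 0)); last by move=> X _; rewrite big_mkcond.
rewrite exchange_big [RHS]big_mkcond; apply: eq_bigr => Y _.
rewrite -big_mkcond /=; case: ifP => YU.
  by rewrite (big_pred1 (U :\: Y)) // => X; rewrite /= disjointU_eqEr.
rewrite big_pred0 // => X; apply/negbTE/negP => /andP[_ /eqP eU].
by move: YU; rewrite -eU subsetUr.
Qed.

Lemma emonoE A U : emono A U = (U == A)%:R.
Proof. by rewrite ffunE. Qed.

Lemma wedge_emonol A c U :
  wedge (emono A) c U = if A \subset U then wsign A (U :\: A) * c (U :\: A) else 0.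
Proof.
rewrite wedgeEl; case: ifP => AU.
  rewrite (bigD1 A) //= big1 ?addr0 => [|X /andP[_ nXA]].
    by rewrite emonoE eqxx mulr1.
  by rewrite emonoE (negbTE nXA) mulr0 mul0r.
rewrite big1 // => X XU; rewrite emonoE; case: eqP => [eXA|]; last by rewrite mulr0 mul0r.
by move: AU; rewrite -eXA XU.
Qed.

Lemma wedge_emonor c A U :
  wedge c (emono A) U = if A \subset U then wsign (U :\: A) A * c (U :\: A) else 0.
Proof.
rewrite wedgeEr; case: ifP => AU.
  rewrite (bigD1 A) //= big1 ?addr0 => [|X /andP[_ nXA]].
    by rewrite emonoE eqxx mulr1.
  by rewrite emonoE (negbTE nXA) mulr0.
rewrite big1 // => X XU; rewrite emonoE; case: eqP => [eXA|]; last by rewrite mulr0.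
by move: AU; rewrite -eXA XU.
Qed.

Lemma wedge1l c : wedge eone c = c.
Proof. by apply/ffunP => U; rewrite wedge_emonol sub0set setD0 wsign0l mul1r. Qed.

Lemma wedge1r c : wedge c eone = c.
Proof. by apply/ffunP => U; rewrite wedge_emonor sub0set setD0 wsign0r mul1r. Qed.

Lemma topPair_emonol A c : topPair (emono A) c = wsign A (~: A) * c (~: A).
Proof. by rewrite /topPair wedge_emonol subsetT setTD. Qed.

Lemma topPair_emonor c A : topPair c (emono A) = wsign (~: A) A * c (~: A).
Proof. by rewrite /topPair wedge_emonor subsetT setTD. Qed.

Lemma extZE (k : F) c U : (k *: c) U = k * c U.
Proof. by rewrite ffunE. Qed.

Definition homog c (d : nat) := forall U, c U != 0 -> #|U| = d.

Lemma homog_emono X : homog (emono X) #|X|.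
Proof. by move=> U; rewrite emonoE; have [->|_] := eqVneq U X; rewrite //= eqxx. Qed.

Lemma homog_wedge a b da db : homog a da -> homog b db -> homog (wedge a b) (da + db).
Proof.
move=> ha hb U; apply: contraNeq => hU; apply/eqP; rewrite wedgeEl big1 // => X XU.
have [->|/ha aX] := eqVneq (a X) 0; first by rewrite mulr0 mul0r.
have [->|/hb bX] := eqVneq (b (U :\: X)) 0; first by rewrite mulr0.
by move: hU; rewrite -(setUD_sub XU) cardsU_disjoint ?disjoint_setD // aX bX eqxx.
Qed.

Lemma homog_sum (I : finType) (f : I -> ext) d : (forall i, homog (f i) d) -> homog (\sum_i f i) d.
Proof.
move=> hf U; rewrite sum_ffunE; apply: contraNeq => cardU; apply/eqP.
by rewrite big1 // => i _; apply/eqP; apply: contraNT cardU => /hf ->.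
Qed.

Lemma homog_Lam a R : a \in Lam F T R -> homog a R.
Proof.
move=> /coord_span -> U; rewrite sum_ffunE; apply: contraNeq => hU; apply/eqP.
rewrite big1 // => i _; rewrite extZE.
rewrite (nth_map set0) -?cardE ?ltn_ord //; set X := nth set0 _ i.
have : X \in [set X : {set T} | #|X| == R] by rewrite -mem_enum mem_nth // -cardE ltn_ord.
rewrite inE emonoE => /eqP cardX.
have [eUX|_] := eqVneq U X; last by rewrite mulr0n mulr0.
by rewrite eUX cardX eqxx in hU.
Qed.

Lemma wedge_emonoC A c d : homog c d ->
  wedge (emono A) c = (-1) ^+ (#|A| * d) *: wedge c (emono A).
Proof.
move=> hc; apply/ffunP => U; rewrite extZE wedge_emonol wedge_emonor.
case: ifP => AU; last by rewrite mulr0.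
have [->|/hc cU] := eqVneq (c (U :\: A)) 0; first by rewrite !mulr0.
by rewrite (wsignC (disjoint_setD A U)) cU -mulrA signrMK.
Qed.

Lemma wedge_emonoA A b c : wedge (emono A) (wedge b c) = wedge (wedge (emono A) b) c.
Proof.
apply/ffunP => U; rewrite wedge_emonol [RHS]wedgeEr.
under eq_bigr do rewrite wedge_emonol.
case: ifP => AU; last first.
  rewrite big1 // => Z ZU; rewrite (_ : (A \subset U :\: Z) = false) ?mulr0 ?mul0r //.
  by apply/negbTE/negP => AUZ; move: AU; rewrite (subset_trans AUZ (subsetDl _ _)).
rewrite wedgeEr mulr_sumr [LHS]big_mkcond [RHS]big_mkcond; apply: eq_bigr => Z _ /=.
case: (boolP (Z \subset U :\: A)) => ZUA; last first.
  case: ifP => ZU //; rewrite (_ : (A \subset U :\: Z) = false) ?mulr0 ?mul0r //.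
  apply/negbTE/negP => /subsetDP[_ dAZ]; move: ZUA.
  by rewrite subsetD ZU disjoint_sym dAZ.
have [ZU dZA] := subsetDP ZUA.
have AUZ : A \subset U :\: Z by rewrite subsetD AU disjoint_sym.
rewrite ZU AUZ; set Y := U :\: A :\: Z.
have eY : U :\: Z :\: A = Y by rewrite /Y !setDDl setUC.
have eYZ : U :\: A = Y :|: Z by rewrite /Y setUC setUD_sub.
have eAY : U :\: Z = A :|: Y by rewrite -eY setUD_sub.
have dYZ : [disjoint Y & Z] by rewrite disjoint_sym disjoint_setD.
have dAY : [disjoint A & Y] by rewrite -eY disjoint_setD.
by rewrite eY eYZ eAY wsignUr // wsignUl //; ring.
Qed.

Definition eword (s : seq T) : ext := foldr wedge eone (map (@egen F T) s).

Lemma eword_cons x s : eword (x :: s) = wedge (@egen F T x) (eword s).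
Proof. by []. Qed.

Lemma eword_neq0 s U : (eword s U != 0) = (U == [set x in s]) && (#|U| == size s).
Proof.
elim: s U => [|x s IHs] U.
  by rewrite /eword /= emonoE set_nil; have [->|_] := eqVneq U set0; rewrite ?cards0 ?oner_eq0 //= eqxx.
rewrite eword_cons /egen wedge_emonol sub1set set_cons.
case: (boolP (x \in U)) => xU; last first.
  by rewrite eqxx /=; apply/esym/negbTE; apply: contra xU => /andP[/eqP -> _]; rewrite setU11.
rewrite mulf_eq0 negb_or wsignE signr_eq0 /= IHs.
have s_card : (#|[set y in s]| <= size s)%N by rewrite cardsE card_size.
apply/andP/andP => [[/eqP eU /eqP cardU]|[/eqP eU /eqP cardU]].
  by rewrite -eU setD1K // (cardsD1 x U) xU cardU.
have xs : x \notin [set y in s].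
  by apply: contraTN s_card => xs; rewrite -ltnNge -ltnS -cardU eU cardsU1 xs.
split; first by rewrite eU setU1K.
by move: cardU; rewrite (cardsD1 x U) xU add1n => -[->].
Qed.

Lemma homog_eword s : homog (eword s) (size s).
Proof. by move=> U; rewrite eword_neq0 => /andP[_ /eqP]. Qed.

Lemma foldr_wedge_egen s c : foldr wedge c (map (@egen F T) s) = wedge (eword s) c.
Proof.
elim: s => [|x s IHs] /=; first by rewrite wedge1l.
by rewrite IHs /egen wedge_emonoA.
Qed.

(* Moving a generator past an even number of generators costs no sign. *)
Lemma eword_rot1 s : odd (size s) -> eword (rot 1 s) = eword s.
Proof.
case: s => [|x s] //= even_s; rewrite rot1_cons -cats1 {1}/eword map_cat foldr_cat.
rewrite /= foldr_wedge_egen wedge1r eword_cons /egen (wedge_emonoC _ (@homog_eword s)).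
by rewrite cards1 mul1n -signr_odd (negbTE even_s) scale1r.
Qed.

Lemma topPair_adjoint q a b d R : homog q d -> homog a R ->
  topPair (wedge q a) b = (-1) ^+ (d * R) * topPair a (wedge q b).
Proof.
move=> hq ha; rewrite /topPair wedgeEr wedgeEl mulr_sumr.
under eq_bigr do rewrite wedgeEr mulr_sumr mulr_suml.
under [RHS]eq_bigr do rewrite wedgeEr !mulr_sumr.
rewrite (eq_bigl xpredT) => [|B]; last by rewrite subsetT.
rewrite [RHS](eq_bigl xpredT) => [|B]; last by rewrite subsetT.
under eq_bigr do rewrite big_mkcond.
rewrite exchange_big; apply: eq_bigr => A _.
rewrite [RHS]big_mkcond; apply: eq_bigr => B _ /=.
rewrite !subsetD !subsetT /= (disjoint_sym B A); case: ifP => // dAB.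
rewrite !setDDl !setTD (setUC B A); set C := ~: (A :|: B).
have [->|/hq qC] := eqVneq (q C) 0; first by rewrite !(mulr0, mul0r).
have [->|/ha aA] := eqVneq (a A) 0; first by rewrite !(mulr0, mul0r).
have := wsign_compl dAB; rewrite -/C qC aA => sign_eq.
transitivity ((wsign (~: B) B * wsign C A) * (q C * a A * b B)); first by ring.
by rewrite sign_eq; ring.
Qed.

Lemma wedge_is_linear c : linear (wedge c).
Proof.
move=> k x y; apply/ffunP => U; rewrite [RHS]ffunE extZE !wedgeEr.
under eq_bigr do rewrite ffunE extZE.
by rewrite mulr_sumr -big_split; apply: eq_bigr => Y _ /=; ring.
Qed.

HB.instance Definition _ c :=
  GRing.isLinear.Build F ext ext *:%R (wedge c) (wedge_is_linear c).

Lemma QmapE c x : Qmap c x = wedge c x.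
Proof. by rewrite lfunE. Qed.

Local Notation m := #|{set T}|.

Definition coef_row a : 'rV[F]_m := \row_j a (enum_val j).

Definition emono_mx := \matrix_(j < m) v2r (emono (enum_val j)).

Lemma ext_sum_emono a : a = \sum_(j < m) a (enum_val j) *: emono (enum_val j).
Proof.
apply/ffunP => U; rewrite sum_ffunE (bigD1 (enum_rank U)) //= big1 => [|j nj].
  by rewrite extZE emonoE enum_rankK eqxx mulr1 addr0.
rewrite extZE emonoE (_ : (U == enum_val j) = false) ?mulr0 //.
by apply/negbTE; apply: contra nj => /eqP ->; rewrite enum_valK.
Qed.

Lemma mul_emono_mx (u : 'rV[F]_m) :
  u *m emono_mx = v2r (\sum_(j < m) u 0 j *: emono (enum_val j)).
Proof.
rewrite mulmx_sum_row linear_sum; apply: eq_bigr => j _.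
by rewrite linearZ rowK.
Qed.

Lemma v2r_coef_row a : v2r a = coef_row a *m emono_mx.
Proof.
rewrite mul_emono_mx {1}(ext_sum_emono a); congr (v2r _); apply: eq_bigr => j _.
by rewrite mxE.
Qed.

Lemma emono_mx_free : row_free emono_mx.
Proof.
rewrite -kermx_eq0; apply/eqP/row_matrixP => i; rewrite row0.
set u := row i (kermx emono_mx).
have u_emono0 : \sum_(j < m) u 0 j *: emono (enum_val j) = 0.
  by apply: (can_inj v2rK); rewrite -mul_emono_mx -row_mul mulmx_ker row0 linear0.
apply/rowP => k; rewrite [RHS]mxE.
have := congr1 (fun f : ext => f (enum_val k)) u_emono0.
rewrite sum_ffunE ffunE (bigD1 k) //= big1 => [|j nj].
  by rewrite extZE emonoE eqxx mulr1 addr0.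
rewrite extZE emonoE (_ : (enum_val k == enum_val j) = false) ?mulr0 //.
by apply/negbTE; apply: contra nj => /eqP/enum_val_inj ->.
Qed.

Lemma dim_span_coef_rows (s : seq ext) :
  \dim <<s>> = \rank (\matrix_(i < size s) coef_row s`_i).
Proof.
rewrite unlock /dimv genmxE.
have -> : b2mx (in_tuple s) = (\matrix_(i < size s) coef_row s`_i) *m emono_mx.
  by apply/row_matrixP => i; rewrite row_mul !rowK v2r_coef_row (tnth_nth 0).
by rewrite mxrankMfree // emono_mx_free.
Qed.

Definition Qmx q (R : nat) : 'M[F]_m := \matrix_(i < m, j < m)
  (if #|enum_val i| == R then wedge q (emono (enum_val i)) (enum_val j) else 0).

Lemma rankQ_Qmx q R : rankQ q R = \rank (Qmx q R).
Proof.
rewrite /rankQ /Lam limg_span.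
pose g X : ext := if #|X| == R then wedge q (emono X) else 0.
have -> : <<map (Qmap q) [seq emono X | X <- enum [set X : {set T} | #|X| == R]]>>%VS
    = <<[seq g X | X <- enum {set T}]>>%VS.
  apply/eqP; rewrite eqEsubv; apply/andP; split; apply/span_subvP => x.
    move=> /mapP[y /mapP[X XR ->] ->]; rewrite QmapE; apply: memv_span.
    apply/mapP; exists X; first by rewrite mem_enum.
    by move: XR; rewrite mem_enum inE /g => ->.
  move=> /mapP[X _ ->]; rewrite /g; case: ifP => cardX; last exact: mem0v.
  apply: memv_span; apply/mapP; exists (emono X); last by rewrite QmapE.
  by apply/mapP; exists X; rewrite // mem_enum inE cardX.
rewrite dim_span_coef_rows size_map -cardE; congr (\rank _).
apply/matrixP => i j; rewrite !mxE (nth_map set0) -?cardE ?ltn_ord //.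
rewrite (_ : nth set0 (enum {set T}) i = enum_val i); last first.
  by rewrite /enum_val; apply: set_nth_default; rewrite -cardE ltn_ord.
by rewrite /g; case: ifP; rewrite // ffunE.
Qed.

Local Notation n := #|T|.

Lemma Qmx_entry_adjoint q d R X Y : homog q d -> (R + d <= n)%N ->
  (if #|X| == R then wedge q (emono X) Y else 0) =
  (-1) ^+ (d * #|X|) * wsign X (~: X) * wsign Y (~: Y) *
  (if #|~: Y| == (n - d - R)%N then wedge q (emono (~: Y)) (~: X) else 0).
Proof.
move=> hq hRd; have adj := topPair_adjoint (emono (~: Y)) hq (@homog_emono X).
rewrite topPair_emonor topPair_emonol setCK in adj.
have cardC Z : #|~: Z| = (n - #|Z|)%N by rewrite cardsCs setCK.
have leTn Z : (#|Z| <= n)%N by apply: max_card.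
have [cardX|cardX] := eqVneq #|X| R; have [cardY|cardY] := eqVneq #|~: Y| (n - d - R)%N.
- transitivity (wsign Y (~: Y) * (wsign Y (~: Y) * wedge q (emono X) Y)).
    by rewrite wsignE signrMK.
  by rewrite adj; ring.
- rewrite mulr0; apply/eqP; apply: contraNT cardY.
  move=> /(homog_wedge hq (@homog_emono X)) cardY; rewrite cardC cardY cardX.
  by apply/eqP; lia.
- rewrite (_ : wedge _ _ (~: X) = 0) ?mulr0 //; apply/eqP; apply: contraNT cardX.
  move=> /(homog_wedge hq (@homog_emono (~: Y))); rewrite cardY cardC => cardXC.
  by apply/eqP; have := leTn X; lia.
- by rewrite mulr0.
Qed.

Definition compl_mx (f : {set T} -> F) : 'M[F]_m := \matrix_(i, k)
  (if k == enum_rank (~: enum_val i) then f (enum_val i) else 0).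

Lemma Qmx_adjoint q d R : homog q d -> (R + d <= n)%N ->
  Qmx q R = compl_mx (fun X => (-1) ^+ (d * #|X|) * wsign X (~: X))
              *m (Qmx q (n - d - R))^T *m (compl_mx (fun Y => wsign Y (~: Y)))^T.
Proof.
move=> hq hRd; apply/matrixP => i j; rewrite !mxE.
rewrite (bigD1 (enum_rank (~: enum_val j))) //= big1 ?addr0; last first.
  by move=> l nl; rewrite !mxE (negbTE nl) mulr0.
rewrite !mxE eqxx (bigD1 (enum_rank (~: enum_val i))) //= big1 ?addr0; last first.
  by move=> l nl; rewrite !mxE (negbTE nl) mul0r.
rewrite !mxE eqxx !enum_rankK (Qmx_entry_adjoint _ _ hq hRd).
by rewrite -!mulrA; congr (_ * (_ * _)); rewrite mulrC.
Qed.

Lemma rankQ_sym q d R : homog q d -> (R + d <= n)%N -> rankQ q R = rankQ q (n - d - R).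
Proof.
move=> hq hRd; have le_rank R' : (R' + d <= n)%N -> (rankQ q R' <= rankQ q (n - d - R'))%N.
  move=> hR'd; rewrite !rankQ_Qmx (Qmx_adjoint hq hR'd).
  rewrite -[X in (_ <= X)%N]mxrank_tr; apply: leq_trans (mxrankM_maxl _ _) _.
  exact: mxrankM_maxr.
apply/eqP; rewrite eqn_leq le_rank //=.
have := le_rank (n - d - R)%N; rewrite (_ : (n - d - (n - d - R) = R)%N); last by lia.
by apply; lia.
Qed.

Lemma rankQ_eq0 q d R : homog q d -> (n < R + d)%N -> rankQ q R = 0%N.
Proof.
move=> hq hRd; apply/eqP; rewrite rankQ_Qmx mxrank_eq0; apply/eqP/matrixP => i j.
rewrite !mxE; case: eqP => // cardX; apply/eqP; apply: contraT.
move=> /(homog_wedge hq (@homog_emono _)); rewrite cardX => cardY.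
by have := max_card (enum_val j); rewrite cardY addnC leqNgt hRd.
Qed.

Lemma rankQ0_neq0 (q : ext) : q != 0 -> rankQ q 0 != 0%N.
Proof.
apply: contraNneq; rewrite rankQ_Qmx => /eqP; rewrite mxrank_eq0 => /eqP Q0; apply/eqP.
apply/ffunP => U; have := congr1 (fun M : 'M[F]_m => M (enum_rank set0) (enum_rank U)) Q0.
by rewrite !mxE !enum_rankK cards0 eqxx wedge1r ffunE.
Qed.

End Exterior.

Section CircuitRotation.
Variables (V : finType) (p : nat).
Implicit Types (i j : 'I_p -> V) (k l : 'I_p) (E : {set V * V}).

Definition cedge i k : V * V := (i k, i (ordS k)).

Definition euler_circuit E i := injective (cedge i) /\ E = [set cedge i k | k : 'I_p].

Hypothesis p_gt1 : 1 < p.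

Lemma ordS_neq k : ordS k != k.
Proof.
apply/eqP => /(congr1 val) /=; have := ltn_ord k.
rewrite leq_eqVlt => /orP[/eqP kp|kp]; last by rewrite modn_small //; lia.
by rewrite kp modnn => k0; move: p_gt1; rewrite -kp -k0.
Qed.

Let z : 'I_p := Ordinal (ltnW p_gt1).

Lemma iter_ordS k : iter k (@ordS p) z = k.
Proof.
apply: val_inj; suff iterz n : n < p -> val (iter n (@ordS p) z) = n by exact: iterz.
by elim: n => // n IHn n_lt_p; rewrite iterS /= IHn ?modn_small // ltnW.
Qed.

Variable E : {set V * V}.
Hypothesis one_exit : forall a b c,
  (a, b) \in E -> (a, c) \in E -> [|| a == b, a == c | b == c].

(* The only exit of [b] besides its loop must come right after the loop. *)
Lemma circuit_loop_next i k : euler_circuit E i ->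
  (i (ordS (ordS k)) == i (ordS k)) = (i k != i (ordS k)) && ((i (ordS k), i (ordS k)) \in E).
Proof.
move=> [inj_i defE]; set b := i (ordS k); set c := i (ordS (ordS k)).
have edgeE k' : cedge i k' \in E by rewrite defE imset_f.
apply/eqP/andP => [cb|[kb]].
  split; last by rewrite -{2}cb; apply: (edgeE (ordS k)).
  apply: contraNneq (ordS_neq k) => kb; apply/eqP/inj_i.
  by rewrite /cedge -/b -/c cb kb.
rewrite defE => /imsetP[m _ [mb Smb]]; apply/eqP; apply: contraNT kb => cb.
have db : i (ordS (ordS m)) != b.
  apply: contraNneq (ordS_neq m) => db; apply/eqP/inj_i.
  by rewrite /cedge db -Smb -mb.
have bdE : (b, i (ordS (ordS m))) \in E by rewrite Smb; apply: edgeE.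
have := one_exit (edgeE (ordS k)) bdE.
rewrite eq_sym (negbTE cb) eq_sym (negbTE db) /= => /eqP cd.
have /ordS_inj km : ordS k = ordS m by apply: inj_i; rewrite /cedge cd -Smb.
by rewrite km -mb.
Qed.

Lemma circuit_next i j k l : euler_circuit E i -> euler_circuit E j ->
  cedge i k = cedge j l -> cedge i (ordS k) = cedge j (ordS l).
Proof.
move=> ci cj [ikl iSkl]; rewrite /cedge iSkl; congr pair.
have := circuit_loop_next k ci; rewrite ikl iSkl -(circuit_loop_next l cj).
set b := j (ordS l); have [-> /eqP //|jb ib] := eqVneq (j (ordS (ordS l))) b.
have ibE : (b, i (ordS (ordS k))) \in E by rewrite ci.2 /b -iSkl imset_f.
have jbE : (b, j (ordS (ordS l))) \in E by rewrite cj.2 imset_f.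
by have := one_exit ibE jbE; rewrite eq_sym ib eq_sym (negbTE jb) => /eqP.
Qed.

Lemma circuit_rotation i j : euler_circuit E i -> euler_circuit E j ->
  exists r, forall k, j k = i (iter r (@ordS p) k).
Proof.
move=> ci cj; have /imsetP[r _ jzr] : cedge j z \in [set cedge i k | k : 'I_p].
  by rewrite -ci.2 cj.2 imset_f.
have step n : cedge j (iter n (@ordS p) z) = cedge i (iter n (@ordS p) r).
  by elim: n => //= n IHn; apply: circuit_next.
exists r => k; have comm : iter k (@ordS p) r = iter r (@ordS p) k.
  by rewrite -{1}(iter_ordS r) -{2}(iter_ordS k) -!iterD addnC.
by have := step k; rewrite iter_ordS comm => -[].
Qed.

End CircuitRotation.

Lemma map_ordS_enum p : map (@ordS p) (enum 'I_p) = rot 1 (enum 'I_p).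
Proof.
case: p => [|p]; first by rewrite enum_ord0.
apply: (inj_map val_inj); rewrite map_rot -map_comp.
rewrite (eq_map (_ : val \o @ordS p.+1 =1 (fun k => k.+1 %% p.+1) \o val)) //.
rewrite map_comp val_enum_ord -[RHS]/(rot 1 (0 :: iota 1 p)) rot1_cons -cats1.
have -> : iota 0 p.+1 = iota 0 p ++ [:: p] by rewrite -addn1 iotaD.
rewrite map_cat /= modnn; congr (_ ++ _).
apply: (@eq_from_nth _ 0) => [|k]; rewrite size_map !size_iota // => k_lt_p.
by rewrite (nth_map 0) ?size_iota // !nth_iota // add0n add1n modn_small.
Qed.

Section WalkMonomials.
Variables (F : fieldType) (N p : nat).
Local Open Scope ring_scope.
Local Notation walk := {ffun 'I_p -> 'I_N}.
Local Notation T := ('I_N * 'I_N)%type.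
Implicit Types (i : walk) (S : {set T}).

Definition walk_mono i : ext F T :=
  \big[@wedge F _/eone F _]_(k < p) Psi F (i k) (i (ordS k)).

Lemma trPsiE : trPsi F N p = \sum_i walk_mono i.
Proof. by []. Qed.

Lemma walk_monoE i : walk_mono i = eword F [seq cedge i k | k <- enum 'I_p].
Proof.
rewrite /walk_mono [index_enum _]unlock -enumT /eword.
by elim: (enum 'I_p) => [|x s IHs] /=; rewrite ?big_nil ?big_cons ?IHs.
Qed.

Lemma homog_trPsi : homog (trPsi F N p) p.
Proof.
rewrite trPsiE; apply: homog_sum => i; rewrite walk_monoE.
by have := @homog_eword F _ [seq cedge i k | k <- enum 'I_p]; rewrite size_map size_enum_ord.
Qed.

Lemma walk_mono_neq0P i S : reflect (euler_circuit S i) (walk_mono i S != 0).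
Proof.
have setE : [set e in [seq cedge i k | k <- enum 'I_p]] = [set cedge i k | k : 'I_p].
  by apply/setP => e; rewrite inE; apply/mapP/imsetP => -[k _ ->]; exists k; rewrite ?mem_enum.
rewrite walk_monoE eword_neq0 setE size_map size_enum_ord.
apply: (iffP andP) => [[/eqP defS /eqP cardS]|[inj_i defS]]; last first.
  by rewrite defS card_imset // card_ord.
split=> //; apply/injectiveP/card_uniqP.
rewrite size_map -cardE card_ord -[in RHS]cardS.
by rewrite defS -setE cardsE.
Qed.

Lemma walk_mono_rot1 i : odd p -> walk_mono [ffun k => i (ordS k)] = walk_mono i.
Proof.
move=> odd_p; rewrite !walk_monoE.
have -> : [seq cedge [ffun k => i (ordS k)] k | k <- enum 'I_p]
    = [seq cedge i k | k <- map (@ordS p) (enum 'I_p)].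
  by rewrite -map_comp; apply: eq_map => k; rewrite /cedge /= !ffunE.
by rewrite map_ordS_enum map_rot eword_rot1 // size_map size_enum_ord.
Qed.

Lemma walk_mono_rot i r : odd p -> walk_mono [ffun k => i (iter r (@ordS p) k)] = walk_mono i.
Proof.
move=> odd_p; elim: r => [|r IHr]; first by congr walk_mono; apply/ffunP => k; rewrite ffunE.
rewrite -IHr -[RHS](walk_mono_rot1 _ odd_p); congr walk_mono.
by apply/ffunP => k; rewrite !ffunE iterSr.
Qed.

End WalkMonomials.

Section Staircase.
Variables (F : numFieldType) (N K : nat).
Hypotheses (K_gt0 : 0 < K) (K_lt_N : K < N).
Local Notation p := K.*2.+1.

Lemma half_lt_N (k : 'I_p) : k./2 < N.
Proof. by have := ltn_ord k; move: (nat_of_ord k) => {}k; rewrite -divn2 -mul2n; lia. Qed.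

(* The closed walk [0, 0, 1, 1, ..., K-1, K-1, K]: it runs through the loops at
   [0, ..., K-1], the steps [v -> v+1] and the edge [K -> 0], each once. *)
Definition stair : {ffun 'I_p -> 'I_N} := [ffun k => Ordinal (half_lt_N k)].

Lemma stairE k : val (stair k) = k./2.
Proof. by rewrite ffunE. Qed.

Lemma stair_ordS k : val (stair (ordS k)) = (if k.+1 == p then 0 else k.+1)./2.
Proof.
rewrite stairE /=; case: eqP => [->|k_neq]; first by rewrite modnn.
by rewrite modn_small // ltn_neqAle ltn_ord andbT; apply/eqP.
Qed.

Lemma stair_edge_inj : injective (cedge stair).
Proof.
move=> k l [/(congr1 val) kl /(congr1 val) Skl]; apply: val_inj; change (k = l :> nat).
move: kl Skl; rewrite !stair_ordS !stairE; have := ltn_ord k; have := ltn_ord l.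
move: (nat_of_ord k) (nat_of_ord l) => {}k {}l; rewrite -!divn2 -!mul2n.
by case: eqP => ?; case: eqP => ? /=; lia.
Qed.

Definition stair_edges := [set cedge stair k | k : 'I_p].

Lemma stair_one_exit a b c :
  (a, b) \in stair_edges -> (a, c) \in stair_edges -> [|| a == b, a == c | b == c].
Proof.
move=> /imsetP[k _ [-> ->]] /imsetP[l _ [/(congr1 val) kl ->]].
rewrite -!(inj_eq val_inj); move: kl; rewrite !stair_ordS !stairE /=.
have := ltn_ord k; have := ltn_ord l.
move: (nat_of_ord k) (nat_of_ord l) => {}k {}l; rewrite -!divn2 -!mul2n.
by have [?|?] := eqVneq k.+1 (2 * K).+1; have [?|?] := eqVneq l.+1 (2 * K).+1; lia.
Qed.

Lemma stair_circuit : euler_circuit stair_edges stair.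
Proof. by split; [apply: stair_edge_inj|]. Qed.

Local Open Scope ring_scope.

Lemma walk_mono_stair (i : {ffun 'I_p -> 'I_N}) :
  euler_circuit stair_edges i -> walk_mono F i = walk_mono F stair.
Proof.
have p_gt1 : (1 < p)%N by rewrite ltnS double_gt0.
move=> /(circuit_rotation p_gt1 stair_one_exit stair_circuit) [r ri].
rewrite -(walk_mono_rot F stair r) /= ?odd_double //.
by congr walk_mono; apply/ffunP => k; rewrite ffunE.
Qed.

(* The coefficient on [stair_edges] is [+-1] times the number of walks around
   [stair_edges]. *)
Lemma trPsi_neq0 : trPsi F N p != 0.
Proof.
set S := stair_edges; suff : trPsi F N p S != 0 by apply: contraNneq => ->; rewrite ffunE.
rewrite trPsiE sum_ffunE (bigID [pred i | walk_mono F i S != 0]) /=.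
rewrite [X in _ + X]big1 ?addr0 => [|i /negPn/eqP //].
rewrite (eq_bigr (fun=> walk_mono F stair S)) => [|i /walk_mono_neq0P/walk_mono_stair -> //].
have stairS : walk_mono F stair S != 0 by apply/walk_mono_neq0P/stair_circuit.
rewrite sumr_const mulrn_eq0 negb_or stairS andbT -lt0n.
by apply/card_gt0P; exists stair; rewrite unfold_in.
Qed.

End Staircase.

Local Open Scope ring_scope.

Lemma size_poly_support (R : nzSemiRingType) (E : nat -> R) n m :
  (m <= n)%N -> E m != 0 -> (forall i, (m < i)%N -> E i = 0) ->
  size (\poly_(i < n.+1) E i) = m.+1.
Proof.
move=> le_mn Em_neq0 E_gt; rewrite -(size_poly_eq (n := m.+1) Em_neq0).
have -> // : \poly_(i < n.+1) E i = \poly_(i < m.+1) E i.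
apply/polyP => i; rewrite !coef_poly.
by case: (ltnP i m.+1) => [/leq_trans -> //|/E_gt ->]; rewrite if_same.
Qed.

Lemma rankPolyE (F : fieldType) N p :
  rankPoly F N p = \poly_(R < (N ^ 2).+1) (rankQ (trPsi F N p) R)%:Z.
Proof. by rewrite poly_def. Qed.

Theorem mainTheorem2 (Rr : realType) (N p : nat) :
  (2 <= N)%N -> odd p -> (3 <= p)%N -> (p <= 2 * N - 1)%N ->
  let F := (Rr[i])%type in
  let q := trPsi F N p in
  (forall (R : nat), (R <= N ^ 2 - p)%N ->
     forall a b : ext F ('I_N * 'I_N)%type,
       a \in Lam F _ R -> b \in Lam F _ (N ^ 2 - p - R) ->
       topPair (wedge q a) b = (-1) ^+ (p * R) * topPair a (wedge q b))
  /\ (forall R : nat, (R <= N ^ 2 - p)%N -> rankQ q R = rankQ q (N ^ 2 - p - R))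
  /\ size (rankPoly F N p) = (N ^ 2 - p).+1
  /\ (forall R : nat, (R <= N ^ 2 - p)%N ->
        (rankPoly F N p)`_R = (rankPoly F N p)`_(N ^ 2 - p - R)).
Proof.
(* [2 <= N] follows from [3 <= p <= 2 * N - 1]. *)
move=> _ odd_p p_ge3 p_le F q.
have hq : homog q p by apply: homog_trPsi.
have cardT : #|{: 'I_N * 'I_N}| = (N ^ 2)%N by rewrite card_prod card_ord mulnn.
have p_le_n : (p <= N ^ 2)%N by rewrite expnS expn1; nia.
have rank_sym R : (R <= N ^ 2 - p)%N -> rankQ q R = rankQ q (N ^ 2 - p - R).
  by move=> le_R; rewrite (rankQ_sym hq) cardT //; lia.
have rank_top : rankQ q (N ^ 2 - p) != 0%N.
  have [K defp] : exists K, p = K.*2.+1.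
    by exists p./2; rewrite -[p in LHS]odd_double_half odd_p.
  rewrite -[(N ^ 2 - p)%N]subn0 -rank_sym // rankQ0_neq0 // /q defp trPsi_neq0 //; lia.
split=> [R _ a b /homog_Lam aR _|]; first exact: topPair_adjoint hq aR.
split=> //; rewrite rankPolyE; split.
  rewrite (size_poly_support (m := (N ^ 2 - p)%N)) ?leq_subr ?eqz_nat //.
  by move=> R gt_R; rewrite (rankQ_eq0 hq) // cardT; lia.
have lt_n R : (R <= N ^ 2 - p)%N -> (R < (N ^ 2).+1)%N.
  by move=> le_R; rewrite ltnS (leq_trans le_R) ?leq_subr.
by move=> R le_R; rewrite !coef_poly !lt_n ?leq_subr // -/q rank_sym.
Qed.
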